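(* Let $(v,\rho)\in\mathbb V^N\times\mathbb P^N$ be a variable network game such that $v$ is component additive. (a) For every link $ij\in g_N$: $\mathbb E(v,\rho^{-ij})=\mathbb E(v,\rho)-\sum_{g\colon ij\notin g}\rho(g+ij)\cdot\Delta_{ij}(v,g)$. (b) For every player $i\in N$: $\mathbb E(v,\rho^{-i})=\mathbb E(v,\rho)-\sum_{g\colon i\in N(g)}\rho(g)\cdot\Delta_i(v,g)$.
   Context: $N=\{1,\dots,n\}$ is a finite player set. A link is an unordered pair $ij=\{i,j\}$ of distinct players; $g_N$ is the set of all links; a network is any $g\subseteq g_N$; $\mathbb G^N$ is the set of all networks. For a network $g$: $N(g)$ is the set of players with at least one link in $g$; $L_i(g)=\{ij\in g\}$; $L_i=L_i(g_N)$; $g+ij=g\cup\{ij\}$. A component of $g$ is a nonempty maximal connected subnetwork of $g$; $C(g)$ is the set of components. A network formation probability distribution is $\rho\colon\mathbb G^N\to[0,1]$ with $\sum_g\rho(g)=1$; $\mathbb P^N$ is the set of these. For a network $g$, the restriction $\rho_g$ is $\rho_g(h)=\sum_{h'\subseteq g_N\setminus g}\rho(h\cup h')$ if $h\subseteq g$ and $0$ otherwise. $\rho^{-ij}=\rho_{g_N\setminus\{ij\}}$ and $\rho^{-i}=\rho_{g_N\setminus L_i}$. A network game is $v\colon\mathbb G^N\to\mathbb R$ with $v(\varnothing)=0$; $\mathbb V^N$ is the set of these; $v$ is component additive if $v(g)=\sum_{h\in C(g)}v(h)$ for all $g$. The expected wealth is $\mathbb E(v,\rho)=\sum_{g\in\mathbb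 G^N}\rho(g)v(g)$. Marginal contributions: for $ij\notin g$, $\Delta_{ij}(v,g)=v(g+ij)-v(g)$; for $i\in N(g)$, $\Delta_i(v,g)=v(g)-v(g\setminus L_i)$. *)

From HB Require Import structures.
From mathcomp Require Import all_boot all_order all_algebra.
Set Implicit Arguments. Unset Strict Implicit. Unset Printing Implicit Defensive.
Import Order.TTheory GRing.Theory Num.Theory.
Local Open Scope ring_scope.

(* Players N = {1,...,n} are represented by 'I_n. *)
Definition link (n : nat) := {l : {set 'I_n} | #|l| == 2%N}.
(* A network is any set of links (a subset of g_N = all links). *)
Definition network (n : nat) := {set link n}.

Section Net.
Variable n : nat.

Definition adj (g : network n) : rel 'I_n :=
  fun i j => [exists l in g, (i != j) && (i \in val l) && (j \in val l)].

Definition players (g : network n) : {set 'I_n} :=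
  [set i | [exists l in g, i \in val l]].

Definition links_of (i : 'I_n) (g : network n) : network n :=
  [set l in g | i \in val l].
Definition all_links_of (i : 'I_n) : network n := links_of i setT.

Definition connected_net (h : network n) : bool :=
  (h != set0) &&
  [forall i in players h, forall j in players h, connect (adj h) i j].

Definition is_component (g h : network n) : bool :=
  [&& h \subset g, connected_net h &
      [forall h' : network n,
         ((h \subset h') && (h' \subset g) && connected_net h') ==> (h' == h)]].

Definition components (g : network n) : {set network n} :=
  [set h | is_component g h].

Variable R : realFieldType.

Definition network_game (v : network n -> R) : Prop := v set0 = 0.

Definition component_additive (v : network n -> R) : Prop :=
  forall g : network n, v g = \sum_(h in components g) v h.

Definition is_prob (rho : network n -> R) : Prop :=
  (forall g, 0 <= rho g) /\ \sum_(g : network n) rho g = 1.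

Definition restr (rho : network n -> R) (g : network n) : network n -> R :=
  fun h => if h \subset g then \sum_(h' : network n | h' \subset ~: g) rho (h :|: h')
           else 0.

Definition rho_minus_link (rho : network n -> R) (ij : link n) :=
  restr rho (~: [set ij]).
Definition rho_minus_player (rho : network n -> R) (i : 'I_n) :=
  restr rho (~: all_links_of i).

Definition expected (v : network n -> R) (rho : network n -> R) : R :=
  \sum_(g : network n) rho g * v g.

Definition delta_link (v : network n -> R) (ij : link n) (g : network n) : R :=
  v (ij |: g) - v g.
Definition delta_player (v : network n -> R) (i : 'I_n) (g : network n) : R :=
  v g - v (g :\: links_of i g).

End Net.

From HB Require Import structures.
From mathcomp Require Import all_boot all_order all_algebra.
Import Order.TTheory GRing.Theory Num.Theory.
Local Open Scope ring_scope.

(* Deleting a set S of links, the restriction rho_{-S} is the image of rho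
   under G |-> G \ S, so E(v, rho_{-S}) = sum_G rho(G) v(G \ S).  Hence
   E(v, rho) - E(v, rho_{-S}) = sum_G rho(G) (v(G) - v(G \ S)), where only the
   networks G meeting S contribute.  For S = {ij} these are the networks
   g + ij with ij not in g; for S = L_i they are those with i in N(g), and
   G \ L_i = G \ L_i(G).  The identities hold for arbitrary v and rho. *)

Lemma big_setU1_notin (T : finType) (V : nmodType) (x : T)
    (F : {set T} -> V) :
  \sum_(A : {set T} | x \in A) F A = \sum_(A : {set T} | x \notin A) F (x |: A).
Proof.
rewrite (reindex_onto (fun A => x |: A) (fun A => A :\ x)) => [|A xA]; last first.
  by rewrite setD1K.
apply: eq_bigl => A; rewrite setU11 /=.
apply/eqP/idP => [<- | xA]; first by rewrite setD11.
by rewrite setU1K.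
Qed.

Section Restriction.
Variables (n : nat) (R : realFieldType).
Implicit Types (v rho : network n -> R) (S G : network n).

Lemma restrC_pushforward rho S h :
  restr rho (~: S) h = \sum_(G | G :\: S == h) rho G.
Proof.
rewrite /restr setCK; case: ifPn => hS; last first.
  rewrite big_pred0 // => G; apply/negbTE; apply: contra hS => /eqP <-.
  by rewrite setDE subsetIr.
have hS0 : h :&: S = set0 by apply/eqP; rewrite setI_eq0 disjoints_subset.
rewrite [RHS](reindex_onto (fun j => h :|: j) (fun G => G :&: S)); last first.
  by move=> G /eqP <-; rewrite setUC setID.
apply: eq_bigl => j; apply/idP/andP => [jS | [_ /eqP <-]]; last exact: subsetIr.
have jS0 : j :\: S = set0 by apply/eqP; rewrite setD_eq0.
split; apply/eqP.
- by rewrite setDUl jS0 setU0; apply/setDidPl; rewrite -setI_eq0 hS0.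
- by rewrite setIUl hS0 set0U; apply/setIidPl.
Qed.

Lemma expected_restrC v rho S :
  expected v (restr rho (~: S)) = \sum_G rho G * v (G :\: S).
Proof.
rewrite /expected [RHS](partition_big (fun G => G :\: S) xpredT) //=.
apply: eq_bigr => h _; rewrite restrC_pushforward big_distrl /=.
by apply: eq_bigr => G /eqP ->.
Qed.

Lemma expected_restrC_sub v rho S :
  expected v (restr rho (~: S)) =
  expected v rho -
    \sum_(G : network n | ~~ [disjoint G & S]) rho G * (v G - v (G :\: S)).
Proof.
have -> : \sum_(G : network n | ~~ [disjoint G & S]) rho G * (v G - v (G :\: S)) =
          \sum_G rho G * (v G - v (G :\: S)).
  rewrite [RHS](bigID (fun G => ~~ [disjoint G & S])) /=.
  rewrite [X in _ + X]big1 ?addr0 // => G /negPn /setDidPl ->.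
  by rewrite subrr mulr0.
rewrite expected_restrC /expected -sumrB; apply: eq_bigr => G _.
by rewrite mulrBr opprB addrC subrK.
Qed.

Lemma disjoint_all_links_of i G :
  [disjoint G & all_links_of i] = (i \notin players G).
Proof.
rewrite disjoints_subset inE negb_exists_in.
by apply/subsetP/forall_inP => G_i l /G_i; rewrite /all_links_of /links_of !inE.
Qed.

Lemma setD_all_links_of i G : G :\: all_links_of i = G :\: links_of i G.
Proof.
apply/setP => l; rewrite /all_links_of /links_of !inE.
by case: (l \in G); rewrite ?andbF.
Qed.

End Restriction.

Theorem proposition3 (R : realFieldType) (n : nat)
  (v : network n -> R) (rho : network n -> R) :
  network_game v -> is_prob rho -> component_additive v ->
  (forall ij : link n,
     expected v (rho_minus_link rho ij) =
     expected v rho -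
       \sum_(g : network n | ij \notin g) rho (ij |: g) * delta_link v ij g) /\
  (forall i : 'I_n,
     expected v (rho_minus_player rho i) =
     expected v rho -
       \sum_(g : network n | i \in players g) rho g * delta_player v i g).
Proof.
move=> _ _ _; split => [ij | i].
- rewrite /rho_minus_link expected_restrC_sub; congr (_ - _).
  transitivity (\sum_(G : network n | ij \in G) rho G * (v G - v (G :\ ij))).
    by apply: eq_bigl => G; rewrite disjoint_sym disjoints1 negbK.
  by rewrite big_setU1_notin; apply: eq_bigr => g ijg; rewrite setU1K.
- rewrite /rho_minus_player expected_restrC_sub; congr (_ - _).
  apply: eq_big => [G | G _]; first by rewrite disjoint_all_links_of negbK.
  by rewrite setD_all_links_of.
Qed.
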